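(* Let $X\subseteq\mathbb{R}^d$ be a finite set of arms with $\|x\|_2\le1$ for all $x\in X$. Let $\theta^*\in\mathbb{R}^d$ be such that $x_*=\arg\max_{x\in X}x^\top\theta^*$ is unique, and for $x\in X$ set $\Delta_x=(x_*-x)^\top\theta^*$. Then for every $L>0$, $$L\cdot\rho\big(\mathcal{Y}(\{z\in X:\Delta_z\le 15/\sqrt L\})\big)\le 900\,\psi^*.$$
   Context: For $S\subseteq X$, $\mathcal{Y}(S)=\{x-x':x,x'\in S,\ x\ne x'\}$. Let $\Delta^X=\{\lambda\in\mathbb{R}^{|X|}:\lambda\ge0,\ \sum_{x\in X}\lambda_x=1\}$, and for $\lambda\in\Delta^X$ let $A(\lambda)=\sum_{x\in X}\lambda_xxx^\top$. Write $\|y\|_M^2=y^\top My$. For a set $A\subseteq\mathbb{R}^d$, the optimal design value is $\rho(A)=\min_{\lambda\in\Delta^X}\max_{y\in A}\|y\|^2_{A(\lambda)^{-1}}$. The instance complexity is $$\psi^*=\min_{\lambda\in\Delta^X}\max_{x\in X\setminus\{x_*\}}\frac{\|x-x_*\|^2_{A(\lambda)^{-1}}}{\big((x_*-x)^\top\theta^*\big)^2}.$$ *)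

From mathcomp Require Import all_boot all_order all_algebra.
From mathcomp Require Import boolp classical_sets reals constructive_ereal ereal.
Set Implicit Arguments. Unset Strict Implicit. Unset Printing Implicit Defensive.
Import Order.TTheory GRing.Theory Num.Theory.
Local Open Scope ring_scope.
Local Open Scope classical_set_scope.

Section Defs.
Variables (R : realType) (d K : nat).
(* The arm set X is {x i | i : 'I_K}, with x injective. *)
Variable x : 'I_K -> 'cV[R]_d.

Definition dotv (u v : 'cV[R]_d) : R := (u^T *m v) 0 0.

Definition sqnorm (u : 'cV[R]_d) : R := dotv u u.

Definition simplex : set ('I_K -> R) :=
  [set lam | (forall i, 0 <= lam i) /\ \sum_(i < K) lam i = 1].

Definition Amat (lam : 'I_K -> R) : 'M[R]_d :=
  \sum_(i < K) lam i *: (x i *m (x i)^T).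

(* ||y||^2_{A(lambda)^{-1}}, taken to be +oo when A(lambda) is singular *)
Definition invnorm2 (lam : 'I_K -> R) (y : 'cV[R]_d) : \bar R :=
  if Amat lam \in unitmx then ((y^T *m invmx (Amat lam) *m y) 0 0)%:E
  else +oo%E.

Definition Yset (S : set 'I_K) : set 'cV[R]_d :=
  [set y | exists i j, [/\ S i, S j, x i != x j & y = x i - x j]].

Definition rho (A : set 'cV[R]_d) : \bar R :=
  ereal_inf [set ereal_sup [set invnorm2 lam y | y in A] | lam in simplex].

Variable theta : 'cV[R]_d.
Variable istar : 'I_K.

Definition gap (i : 'I_K) : R := dotv (x istar - x i) theta.

Definition psi_star : \bar R :=
  ereal_inf [set ereal_sup
     [set (invnorm2 lam (x i - x istar) * ((gap i ^+ 2)^-1)%:E)%E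
        | i in [set i | x i != x istar]]
   | lam in simplex].

End Defs.

From mathcomp Require Import all_boot all_order all_algebra.
From mathcomp Require Import classical_sets reals constructive_ereal ereal.
From mathcomp Require Import ring lra.
Set Implicit Arguments. Unset Strict Implicit. Unset Printing Implicit Defensive.
Import Order.TTheory GRing.Theory Num.Theory.
Local Open Scope ring_scope.
Local Open Scope classical_set_scope.

(* For a design [lam] write psi(lam) for the max defining psi^*, so that
   ||x_i - x_*||^2_{A(lam)^-1} <= gap_i^2 psi(lam) for every arm i.  If x_i and x_j
   both have gap at most r, the parallelogram law for the positive semidefinite
   form y |-> ||y||^2_{A(lam)^-1} gives
   ||x_i - x_j||^2 <= 2 ||x_i - x_*||^2 + 2 ||x_j - x_*||^2 <= 4 r^2 psi(lam).
   Taking the infimum over lam bounds rho(Y(S)) by 4 r^2 psi^*, and r = 15 / sqrt L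
   turns 4 r^2 into 900 / L. *)

Definition qform (R : pzRingType) n (M : 'M[R]_n) (v : 'cV[R]_n) : R :=
  (v^T *m M *m v) 0 0.

Lemma qform0 (R : pzRingType) n (M : 'M[R]_n) : qform M 0 = 0.
Proof. by rewrite /qform mulmx0 mxE. Qed.

Lemma qform_parallelogram (R : comPzRingType) n (M : 'M[R]_n) u w :
  qform M (u - w) + qform M (u + w) = 2 * qform M u + 2 * qform M w.
Proof. by rewrite /qform !linearB !linearD /= !mulmxBl !mulmxDl !mxE; ring. Qed.

Lemma qform_sub_le (R : realDomainType) n (M : 'M[R]_n) u w :
  0 <= qform M (u + w) -> qform M (u - w) <= 2 * qform M u + 2 * qform M w.
Proof. by have := qform_parallelogram M u w; lra. Qed.

Lemma qform_invmx (R : comUnitRingType) n (A : 'M[R]_n) w :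
  A \in unitmx -> qform (invmx A) (A *m w) = qform A w.
Proof.
move=> Au; rewrite /qform trmx_mul -!mulmxA (mulmxA (invmx A)) mulVmx // mul1mx.
by rewrite -[w^T *m (A *m w)]trmxK [in RHS]mxE !trmx_mul trmxK mulmxA.
Qed.

Lemma qform_invmx_ge0 (R : numDomainType) n (A : 'M[R]_n) v :
  A \in unitmx -> (forall w, 0 <= qform A w) -> 0 <= qform (invmx A) v.
Proof. by move=> Au A_psd; rewrite -(mulKVmx Au v) qform_invmx. Qed.

Lemma le_ereal_inf_pmul (R : realType) T (P : set T) (f g : T -> \bar R) r :
  0 < r -> (forall t, P t -> (f t <= r%:E * g t)%E) ->
  (ereal_inf (f @` P) <= r%:E * ereal_inf (g @` P))%E.
Proof.
move=> r0 fg; rewrite -lee_pdivrMl //; apply: le_ereal_inf_tmp => _ [t Pt <-].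
by rewrite lee_pdivrMl //; apply: le_trans (fg t Pt); apply: ereal_inf_lbound; exists t.
Qed.

Section OptimalDesign.
Variables (R : realType) (d K : nat) (x : 'I_K -> 'cV[R]_d) (lam : 'I_K -> R).
Hypothesis lam_ge0 : forall i, 0 <= lam i.

Lemma qform_Amat_ge0 w : 0 <= qform (Amat x lam) w.
Proof.
rewrite /qform /Amat mulmx_sumr mulmx_suml summxE; apply: sumr_ge0 => i _.
rewrite -scalemxAr -scalemxAl mxE; apply: mulr_ge0 => //.
rewrite !mulmxA -[_ *m w]mulmxA.
have -> : (x i)^T *m w = (w^T *m x i)^T by rewrite trmx_mul trmxK.
by rewrite mxE big_ord1 [X in _ * X]mxE -expr2 sqr_ge0.
Qed.

Lemma qform_invAmat_ge0 v :
  Amat x lam \in unitmx -> 0 <= qform (invmx (Amat x lam)) v.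
Proof. by move=> Au; apply: qform_invmx_ge0 => // w; apply: qform_Amat_ge0. Qed.

Lemma invnorm2E v : invnorm2 x lam v =
  if Amat x lam \in unitmx then (qform (invmx (Amat x lam)) v)%:E else +oo%E.
Proof. by []. Qed.

Lemma invnorm2_ge0 v : (0 <= invnorm2 x lam v)%E.
Proof. by rewrite invnorm2E; case: ifP => // Au; rewrite lee_fin qform_invAmat_ge0. Qed.

Lemma invnorm2_0_le v : (invnorm2 x lam 0 <= invnorm2 x lam v)%E.
Proof.
by rewrite !invnorm2E; case: ifP => // Au; rewrite qform0 lee_fin qform_invAmat_ge0.
Qed.

Lemma invnorm2_sub_le u w c :
  (invnorm2 x lam u <= c)%E -> (invnorm2 x lam w <= c)%E ->
  (invnorm2 x lam (u - w) <= 4%:E * c)%E.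
Proof.
have := invnorm2_ge0 u; rewrite !invnorm2E.
case: ifP => Au; last by rewrite leye_eq => _ /eqP -> _; rewrite mulry gtr0_sg ?mul1e.
case: c => [c| |] _; rewrite ?leeNy_eq //; last by rewrite mulry gtr0_sg ?mul1e ?leey.
rewrite -EFinM !lee_fin => uc wc.
have := qform_sub_le (qform_invAmat_ge0 (u + w) Au); lra.
Qed.

End OptimalDesign.

Section Gaps.
Variables (R : realType) (d K : nat) (x : 'I_K -> 'cV[R]_d).
Variables (theta : 'cV[R]_d) (istar : 'I_K).
Hypothesis istar_uniq : forall i, i != istar -> dotv (x i) theta < dotv (x istar) theta.

Local Notation gap := (gap x theta istar).

Lemma gapE i : gap i = dotv (x istar) theta - dotv (x i) theta.
Proof. by rewrite /gap /dotv linearB /= mulmxBl !mxE. Qed.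

Lemma gap_gt0 i : i != istar -> 0 < gap i.
Proof. by rewrite gapE subr_gt0; apply: istar_uniq. Qed.

Lemma gap_ge0 i : 0 <= gap i.
Proof. by case: (eqVneq i istar) => [->|/gap_gt0/ltW]; rewrite ?gapE ?subrr. Qed.

Definition psi_at (lam : 'I_K -> R) : \bar R :=
  ereal_sup [set (invnorm2 x lam (x i - x istar) * ((gap i ^+ 2)^-1)%:E)%E
               | i in [set i | x i != x istar]].

Section FixedDesign.
Variable lam : 'I_K -> R.
Hypothesis lam_ge0 : forall i, 0 <= lam i.

Lemma invnorm2_le_psi_at k : x k != x istar ->
  (invnorm2 x lam (x k - x istar) <= (gap k ^+ 2)%:E * psi_at lam)%E.
Proof.
move=> xk; have gk2 : 0 < gap k ^+ 2.
  by rewrite exprn_gt0 // gap_gt0 //; apply: contraNneq xk => ->.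
have : (invnorm2 x lam (x k - x istar) * ((gap k ^+ 2)^-1)%:E <= psi_at lam)%E.
  by apply: ereal_sup_ubound; exists k.
have gk2E : (0 <= (gap k ^+ 2)%:E)%E by rewrite lee_fin ltW.
by move=> /(lee_wpmul2l gk2E); rewrite muleCA -EFinM divff ?gt_eqF // mule1.
Qed.

Lemma psi_at_ge0 k : x k != x istar -> (0 <= psi_at lam)%E.
Proof.
move=> xk; apply: le_trans (ereal_sup_ubound _); last by exists k.
by rewrite mule_ge0 ?invnorm2_ge0 // lee_fin invr_ge0 exprn_ge0 ?gap_ge0.
Qed.

Lemma sup_invnorm2_Yset_le r :
  (ereal_sup [set invnorm2 x lam y | y in Yset x [set z | (gap z <= r)%R]]
     <= (4 * r ^+ 2)%:E * psi_at lam)%E.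
Proof.
set near := [set z | gap z <= r].
apply: ge_ereal_sup => _ [_ [i [j [near_i near_j xij ->]]] <-].
have [k near_k xk] : exists2 k, near k & x k != x istar.
  have [xi|] := eqVneq (x i) (x istar); last by exists i.
  by exists j => //; rewrite -xi eq_sym.
have arm_le m : near m -> x m != x istar ->
    (invnorm2 x lam (x m - x istar) <= (r ^+ 2)%:E * psi_at lam)%E.
  move=> near_m xm; apply: le_trans (invnorm2_le_psi_at xm) _.
  apply: (lee_wpmul2r (psi_at_ge0 xk)); rewrite lee_fin.
  by apply: lerXn2r; rewrite ?nnegrE ?gap_ge0 ?(le_trans (gap_ge0 m)).
have near_le m : near m -> (invnorm2 x lam (x m - x istar) <= (r ^+ 2)%:E * psi_at lam)%E.
  move=> near_m; have [xm|] := eqVneq (x m) (x istar); last exact: arm_le.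
  rewrite xm subrr; apply: le_trans (arm_le k near_k xk); exact: invnorm2_0_le.
rewrite (_ : x i - x j = (x i - x istar) - (x j - x istar)); last first.
  by rewrite opprB addrA subrK.
by rewrite EFinM -muleA; apply: invnorm2_sub_le => //; apply: near_le.
Qed.

End FixedDesign.

Lemma rho_Yset_gap_le r : 0 < r ->
  (rho x (Yset x [set z | (gap z <= r)%R]) <= (4 * r ^+ 2)%:E * psi_star x theta istar)%E.
Proof.
move=> r_gt0; apply: le_ereal_inf_pmul; first by rewrite mulr_gt0 ?exprn_gt0.
by move=> lam [lam_ge0 _]; apply: sup_invnorm2_Yset_le.
Qed.

End Gaps.

Theorem lemma1 (R : realType) (d K : nat) (x : 'I_K -> 'cV[R]_d)
  (x_inj : injective x)
  (x_norm : forall i, sqnorm (x i) <= 1)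
  (theta : 'cV[R]_d) (istar : 'I_K)
  (istar_uniq : forall i, i != istar -> dotv (x i) theta < dotv (x istar) theta)
  (L : R) (L_pos : 0 < L) :
  (L%:E * rho x (Yset x [set z | (gap x theta istar z <= 15 / Num.sqrt L)%R]) <=
   900%:E * psi_star x theta istar)%E.
Proof.
have r_gt0 : 0 < 15 / Num.sqrt L by rewrite divr_gt0 ?sqrtr_gt0.
have L_ge0 : (0 <= L%:E)%E by rewrite lee_fin ltW.
apply: le_trans (lee_wpmul2l L_ge0 (rho_Yset_gap_le istar_uniq r_gt0)) _.
rewrite muleA -EFinM expr_div_n sqr_sqrtr; last exact: ltW.
by rewrite (_ : L * _ = 900) //; field; rewrite gt_eqF.
Qed.
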